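(* Let $n\in\mathbb{N}$ and let $E$ be a symmetric function space on $(0,\infty)$. If $E^0\cap L_\infty\subset L_{n,1}$, then $E\cap L_\infty\subset L_{n,1}$.
   Context: A symmetric function space on $(0,\infty)$ is a Banach space $E$ of real-valued measurable functions such that whenever $y\in E$ and $x$ is measurable with $\mu(x)\le\mu(y)$ ($\mu$ = decreasing rearrangement of the absolute value), then $x\in E$ and $\|x\|_E\le\|y\|_E$. $E^0$ is the closure of $L_1\cap L_\infty$ in $E$. $L_{n,1}$ is the Lorentz space of measurable $f$ with $\|f\|_{L_{n,1}}=\int_0^\infty\mu(t;f)\,d(t^{1/n})<\infty$. *)

From mathcomp Require Import all_boot all_order all_algebra.
From mathcomp Require Import all_classical all_reals all_analysis.
Import Order.TTheory GRing.Theory Num.Theory.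

Set Implicit Arguments.
Unset Strict Implicit.
Unset Printing Implicit Defensive.

Local Open Scope classical_set_scope.
Local Open Scope ring_scope.

(* Carrier of the (completed) Lebesgue sigma-algebra on R: definitionally R. *)
Notation LR R := (caratheodory_type (R:=R) (wlength (R:=R) idfun)^*%mu).

Definition lam {R : realType} : set (LR R) -> \bar R :=
  @completed_lebesgue_measure R.

(* The half-line (0, oo). Functions are R -> R; only values on (0,oo) matter. *)
Definition pos_half {R : realType} : set (LR R) := [set t : R | 0 < t].

Definition lmeas {R : realType} (f : R -> R) : Prop :=
  measurable_fun (pos_half : set (LR R)) (f : LR R -> R).

Definition dist_fun {R : realType} (f : R -> R) (s : R) : \bar R :=
  lam ([set t : R | 0 < t /\ s < `|f t|] : set (LR R)).

Definition rearr {R : realType} (f : R -> R) (t : R) : \bar R :=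
  ereal_inf [set s%:E | s in [set s : R | 0 <= s /\ (dist_fun f s <= t%:E)%E]].

Definition Linfty {R : realType} (f : R -> R) : Prop :=
  lmeas f /\ exists C : R, dist_fun f C = 0%E.

Definition L1 {R : realType} (f : R -> R) : Prop :=
  lmeas f /\ (\int[lam]_(t in (pos_half : set (LR R))) (`|f t|)%:E < +oo)%E.

(* ||f||_{L_{n,1}} = int_0^oo mu(t;f) d(t^{1/n})
                   = int_0^oo mu(t;f) (1/n) t^{1/n - 1} dt *)
Definition Ln1_norm {R : realType} (n : nat) (f : R -> R) : \bar R :=
  (\int[lam]_(t in (pos_half : set (LR R)))
     (rearr f t * ((n%:R)^-1 * powR t ((n%:R)^-1 - 1))%:E))%E.

Definition Ln1 {R : realType} (n : nat) (f : R -> R) : Prop :=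
  lmeas f /\ (Ln1_norm n f < +oo)%E.

(* A symmetric function space on (0,oo): a set E of measurable functions with
   a norm nrm making it a Banach space (functions identified a.e.), such that
   mu(x) <= mu(y), y in E, x measurable  ==>  x in E and ||x|| <= ||y||. *)
Record symmetric_function_space {R : realType}
    (E : set (R -> R)) (nrm : (R -> R) -> R) : Prop := {
  sfs_meas : forall x, E x -> lmeas x;
  sfs_zero : E (fun _ => 0);
  sfs_add : forall x y, E x -> E y -> E (fun t => x t + y t);
  sfs_scale : forall (c : R) x, E x -> E (fun t => c * x t);
  sfs_triangle : forall x y, E x -> E y ->
    nrm (fun t => x t + y t) <= nrm x + nrm y;
  sfs_homog : forall (c : R) x, E x -> nrm (fun t => c * x t) = `|c| * nrm x;
  sfs_definite : forall x, E x -> nrm x = 0 -> dist_fun x 0 = 0%E;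
  sfs_complete : forall u : nat -> R -> R, (forall k, E (u k)) ->
    (forall e : R, 0 < e -> exists N : nat, forall m k : nat,
        (N <= m)%N -> (N <= k)%N -> nrm (fun t => u m t - u k t) < e) ->
    exists x, E x /\ (forall e : R, 0 < e -> exists N : nat, forall k : nat,
        (N <= k)%N -> nrm (fun t => u k t - x t) < e);
  sfs_sym : forall x y, E y -> lmeas x ->
    (forall t : R, 0 < t -> (rearr x t <= rearr y t)%E) ->
    E x /\ nrm x <= nrm y
}.

Definition E0 {R : realType} (E : set (R -> R)) (nrm : (R -> R) -> R)
    (x : R -> R) : Prop :=
  E x /\ forall e : R, 0 < e -> exists y, [/\ E y, L1 y, Linfty y &
     nrm (fun t => x t - y t) < e].

From mathcomp Require Import all_boot all_order all_algebra.
From mathcomp Require Import all_classical all_reals all_analysis.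
From mathcomp Require Import measurable_realfun.
Import Order.TTheory GRing.Theory Num.Theory.

Set Implicit Arguments.
Unset Strict Implicit.
Unset Printing Implicit Defensive.

Local Open Scope classical_set_scope.
Local Open Scope ring_scope.

(* Let x be in E and bounded, and let phi = mu(x), a bounded, nonincreasing,
   right-continuous function.  A measurable g with |g| <= phi has mu(g) <= mu(x),
   hence lies in E.  In particular every truncation phi 1_(0,a) lies in
   E cap L_1 cap L_oo, which is contained in E^0, so the integral of phi against
   d(t^(1/n)) over (0,a) is finite for every a.  If the whole integral, i.e. the
   L_{n,1} norm of x, were infinite, one could choose integers T_0 < T_1 < ...
   such that the integral over [T_k, T_{k+1}) is at least k+1, and define
   z = phi/(k+1) on [T_k, T_{k+1}).  Then z <= phi is still nonincreasing and
   right-continuous, so mu(z) >= z and the L_{n,1} norm of z is at least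
   sum_k 1 = oo.  Yet z lies in E^0 cap L_oo: z - z 1_(0,T_k) <= phi/(k+1) has
   E-norm at most ||x||/(k+1). *)

(* Unlike [ge0_le_integral], no measurability is required, so this applies to
   integrands involving [rearr g], whose measurability is not established. *)
Lemma le_ge0_integral d (T : measurableType d) (R : realType)
    (mu : {measure set T -> \bar R}) (D : set T) (f1 f2 : T -> \bar R) :
  (forall t, D t -> 0 <= f1 t)%E -> (forall t, D t -> f1 t <= f2 t)%E ->
  (\int[mu]_(t in D) f1 t <= \int[mu]_(t in D) f2 t)%E.
Proof.
move=> f10 f12.
rewrite !ge0_integralE // => [|t Dt]; last exact: le_trans (f10 t Dt) (f12 t Dt).
apply: ereal_sup_le => _ [h hf <-]; exists h => //= t.
apply: le_trans (hf t) _; rewrite /patch; case: ifP => // /set_mem; exact: f12.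
Qed.

Lemma dependent_choice_nat (P : nat -> nat -> nat -> Prop) :
  (forall k a, exists b, (a < b)%N /\ P k a b) ->
  exists T : nat -> nat, forall k, (T k < T k.+1)%N /\ P k (T k) (T k.+1).
Proof.
move=> hP; have /choice [next hnext] : forall ka : nat * nat,
    exists b, (ka.2 < b)%N /\ P ka.1 ka.2 b by move=> [k a]; exact: hP.
by exists (fix T k := if k is k'.+1 then next (k', T k') else 0%N) => k; exact: hnext.
Qed.

Section half_line.
Context {R : realType}.
Implicit Types (A B : set R) (f g G : R -> R) (a b t u v : R).

Lemma measurable_lebesgue A : measurable A -> measurable (A : set (LR R)).
Proof. exact: (@sub_caratheodory _ (ocitv_type R) R (wlength idfun) A). Qed.

Lemma lamE A : lam (A : set (LR R)) = lebesgue_measure A.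
Proof. by []. Qed.

Lemma le_lam A B : A `<=` B -> (lam (A : set (LR R)) <= lam (B : set (LR R)))%E.
Proof. by move=> AB; apply: le_outer_measure. Qed.

Lemma lam_itv_oc (t : R) : 0 < t -> lam (`]0, t]%classic : set (LR R)) = t%:E.
Proof. by move=> t0; rewrite lamE lebesgue_measure_itv /= lte_fin t0 /= sube0. Qed.

Lemma lam_itv_oo (t : R) : 0 < t -> lam (`]0, t[%classic : set (LR R)) = t%:E.
Proof. by move=> t0; rewrite lamE lebesgue_measure_itv /= lte_fin t0 /= sube0. Qed.

Lemma pos_half_itv : (pos_half : set R) = `]0, +oo[%classic.
Proof. by apply/seteqP; split=> u /=; rewrite in_itv /= andbT. Qed.

Lemma measurable_pos_half : measurable (pos_half : set R).
Proof. by rewrite pos_half_itv; exact: measurable_itv. Qed.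

Lemma measurable_pos_half_lebesgue : measurable (pos_half : set (LR R)).
Proof. exact: measurable_lebesgue measurable_pos_half. Qed.

Lemma lmeas_measurable f : measurable_fun (pos_half : set R) f -> lmeas f.
Proof.
by move=> mf _ Y mY; apply: measurable_lebesgue; apply: mf => //; exact: measurable_pos_half.
Qed.

Definition nonincreasing_pos g := forall u v, 0 < u -> u <= v -> g v <= g u.

Lemma lmeas_noninc g (M : R) :
  nonincreasing_pos g -> (forall u, 0 < u -> g u <= M) -> lmeas g.
Proof.
move=> gni gM; apply: lmeas_measurable.
pose g' u := if 0 < u then g u else M.
apply: (@eq_measurable_fun _ _ _ _ _ g') => [u|].
  by rewrite inE /= /g' => ->.
apply: nonincreasing_measurable; first exact: measurable_pos_half.
move=> u v uv; rewrite /g'; case: ifP => v0; case: ifP => u0.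
- exact: gni.
- exact: gM.
- by rewrite (lt_le_trans u0 uv) in v0.
- exact: lexx.
Qed.

Definition cutoff (a : R) g t := (t < a)%R%:R * g t.
Definition window (a b : R) g t := (a <= t)%R%:R * cutoff b g t.

Lemma lmeas_cutoff a g : lmeas g -> lmeas (cutoff a g).
Proof.
move=> mg; have mstep : lmeas (fun t => (t < a)%R%:R).
  apply: lmeas_measurable; apply: nonincreasing_measurable => [|u v uv].
    exact: measurable_pos_half.
  by case: (ltP v a) => va; rewrite ?ler0n ?(le_lt_trans uv va).
exact: measurable_funM mstep mg.
Qed.

Lemma lmeas_window a b g : lmeas g -> lmeas (window a b g).
Proof.
move=> mg; have mstep : lmeas (fun t => (a <= t)%R%:R).
  apply: lmeas_measurable; apply: nondecreasing_measurable => [|u v uv].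
    exact: measurable_pos_half.
  by case: (leP a u) => au; rewrite ?ler0n ?(le_trans au uv).
exact: measurable_funM mstep (lmeas_cutoff b mg).
Qed.

Lemma cutoff_ge0 a g t : 0 <= g t -> 0 <= cutoff a g t.
Proof. exact: mulr_ge0. Qed.

Lemma window_ge0 a b g t : 0 <= g t -> 0 <= window a b g t.
Proof. by move=> g0; rewrite mulr_ge0 // cutoff_ge0. Qed.

Lemma cutoffD a b g t : a <= b -> cutoff b g t = cutoff a g t + window a b g t.
Proof.
move=> ab; rewrite /window /cutoff; case: (ltP t a) => ta.
  by rewrite (lt_le_trans ta ab) !mul0r addr0.
by rewrite !mul0r add0r mul1r.
Qed.

Definition int_pos f : \bar R := \int[lam]_(t in (pos_half : set (LR R))) (f t)%:E.

Lemma int_pos_ge0 f : (forall t, 0 < t -> 0 <= f t) -> (0 <= int_pos f)%E.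
Proof. by move=> f0; apply: integral_ge0 => t t0; rewrite lee_fin f0. Qed.

Lemma le_int_pos f g : (forall t, 0 < t -> 0 <= f t) ->
  (forall t, 0 < t -> f t <= g t) -> (int_pos f <= int_pos g)%E.
Proof. by move=> f0 fg; apply: le_ge0_integral => t t0; [exact: f0 | exact: fg]. Qed.

Lemma int_posZ (c : R) f : 0 <= c -> lmeas f -> (forall t, 0 < t -> 0 <= f t) ->
  int_pos (fun t => c * f t) = (c%:E * int_pos f)%E.
Proof.
move=> c0 mf f0; rewrite /int_pos -ge0_integralZl_EFin //.
- exact: measurable_pos_half_lebesgue.
- exact/measurable_EFinP.
Qed.

Lemma int_pos_cutoffD a b G : a <= b -> lmeas G -> (forall t, 0 < t -> 0 <= G t) ->
  int_pos (cutoff b G) = (int_pos (cutoff a G) + int_pos (window a b G))%E.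
Proof.
move=> ab mG G0; rewrite /int_pos -ge0_integralD.
- by apply: eq_integral => t _; rewrite (cutoffD _ _ ab) EFinD.
- exact: measurable_pos_half_lebesgue.
- by move=> t t0; exact/cutoff_ge0/G0.
- exact/measurable_EFinP/lmeas_cutoff.
- by move=> t t0; exact/window_ge0/G0.
- exact/measurable_EFinP/lmeas_window.
Qed.

Lemma cvg_int_pos_cutoff G : lmeas G -> (forall t, 0 < t -> 0 <= G t) ->
  int_pos (cutoff m%:R G) @[m --> \oo] --> int_pos G.
Proof.
move=> mG G0; rewrite {2}/int_pos.
have -> : (\int[lam]_(t in (pos_half : set (LR R))) (G t)%:E =
    \int[lam]_(t in (pos_half : set (LR R))) limn (fun m => (cutoff m%:R G t)%:E))%E.
  apply: eq_integral => t _; apply/esym; apply: lim_near_cst => //.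
  exists (Num.truncn t).+1 => // m /= tm.
  by rewrite /cutoff (lt_le_trans (truncnS_gt t)) ?mul1r // ler_nat.
apply: cvg_monotone_convergence.
- exact: measurable_pos_half_lebesgue.
- by move=> m; exact/measurable_EFinP/lmeas_cutoff.
- by move=> m t t0; exact/cutoff_ge0/G0.
- move=> t t0 m1 m2 m12; rewrite lee_fin /cutoff ler_wpM2r ?G0 //.
  by case: (ltP t m1%:R) => // tm1; rewrite (lt_le_trans tm1) // ler_nat.
Qed.

End half_line.

Section rearrangement.
Context {R : realType}.
Implicit Types (g h : R -> R) (a c s t u : R).
Local Open Scope ereal_scope.

Lemma dist_fun_noninc g s1 s2 : (s1 <= s2)%R -> dist_fun g s2 <= dist_fun g s1.
Proof. by move=> s12; apply: le_lam => u [u0 su]; split => //; exact: le_lt_trans su. Qed.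

Lemma rearr_ge0 g t : 0 <= rearr g t.
Proof. by apply: le_ereal_inf_tmp => _ [s [s0 _] <-]; rewrite lee_fin. Qed.

Lemma rearr_le g t s : (0 <= s)%R -> dist_fun g s <= t%:E -> rearr g t <= s%:E.
Proof. by move=> s0 ds; apply: ereal_inf_lbound; exists s. Qed.

Lemma rearr_ge g t a :
  (forall s, (0 <= s)%R -> dist_fun g s <= t%:E -> (a <= s)%R) -> a%:E <= rearr g t.
Proof. by move=> ha; apply: le_ereal_inf_tmp => _ [s [s0 ds] <-]; rewrite lee_fin ha. Qed.

Lemma rearr_noninc g t1 t2 : (t1 <= t2)%R -> rearr g t2 <= rearr g t1.
Proof.
move=> t12; apply: le_ereal_inf_tmp => _ [s [s0 ds] <-]; apply: rearr_le => //.
by apply: le_trans ds _; rewrite lee_fin.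
Qed.

Lemma rearr_gt_right g t s :
  s%:E < rearr g t -> exists2 t', (t < t')%R & s%:E < rearr g t'.
Proof.
move=> st; have [s_lt0|s_ge0] := ltP s 0%R.
  by exists (t + 1)%R; [rewrite ltrDl | apply: lt_le_trans (rearr_ge0 _ _)].
apply: contrapT => Nst.
have rearr_le_s t' : (t < t')%R -> rearr g t' <= s%:E.
  by move=> tt'; rewrite leNgt; apply/negP => st'; apply: Nst; exists t'.
suff rearr_le_r r : (s < r)%R -> rearr g t <= r%:E.
  have : rearr g t <= s%:E.
    by apply/lee_addgt0Pr => e e0; rewrite -EFinD; apply: rearr_le_r; rewrite ltrDl.
  by rewrite leNgt st.
move=> sr; apply: rearr_le; first exact: le_trans (ltW sr).
apply/lee_addgt0Pr => e e0.
have /ereal_inf_lt [_ [s' [_ ds'] <-]] : rearr g (t + e) < r%:E.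
  by apply: le_lt_trans (rearr_le_s _ _) _; rewrite ?ltrDl ?lte_fin.
rewrite lte_fin => s'r; rewrite -EFinD; apply: le_trans ds'.
exact: dist_fun_noninc (ltW s'r).
Qed.

Lemma rearrZ_ge g t c a : (0 < c)%R -> a%:E <= rearr g t ->
  (c * a)%:E <= rearr (fun u => c * g u)%R t.
Proof.
move=> c0 ag; apply: rearr_ge => s s0 ds; rewrite -ler_pdivlMl // -lee_fin.
apply: le_trans ag (rearr_le _ _); first by rewrite mulr_ge0 // invr_ge0 ltW.
apply: le_trans ds; apply: le_lam => u [u0 su]; split => //.
by rewrite normrM gtr0_norm // -ltr_pdivrMl.
Qed.

Lemma rearr_le_Linfty g C t : dist_fun g C = 0 -> (0 <= t)%R ->
  rearr g t <= (Num.max C 0)%:E.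
Proof.
move=> gC t0; apply: rearr_le; first by rewrite le_max lexx orbT.
have CC' : (C <= Num.max C 0)%R by rewrite le_max lexx.
by apply: le_trans (dist_fun_noninc g CC') _; rewrite gC lee_fin.
Qed.

Lemma rearr_le_noninc g h t : (0 < t)%R -> (0 <= h t)%R -> nonincreasing_pos h ->
  (forall u, (0 < u)%R -> (`|g u| <= h u)%R) -> rearr g t <= (h t)%:E.
Proof.
move=> t0 ht0 hni gh; apply: rearr_le => //; rewrite -(lam_itv_oo t0); apply: le_lam.
move=> u [u0 hu] /=; rewrite in_itv /= u0 ltNge; apply/negP => tu.
by have := lt_le_trans hu (le_trans (gh u u0) (hni _ _ t0 tu)); rewrite ltxx.
Qed.

(* For nonincreasing [g] this is right-continuity on (0, oo). *)
Definition right_lsc g :=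
  forall t s, (0 < t)%R -> (s < g t)%R -> exists2 t', (t < t')%R & (s < g t')%R.

Lemma noninc_le_rearr g t : (0 < t)%R -> nonincreasing_pos g -> right_lsc g ->
  (g t)%:E <= rearr g t.
Proof.
move=> t0 gni grc; apply: rearr_ge => s s0 ds; rewrite leNgt; apply/negP => sgt.
have [t' tt' st'] := grc t s t0 sgt.
have t'0 : (0 < t')%R := lt_trans t0 tt'.
have : lam (`]0%R, t']%classic : set (LR R)) <= dist_fun g s.
  apply: le_lam => u /=; rewrite in_itv /= => /andP[u0 ut]; split => //.
  exact: lt_le_trans st' (le_trans (gni _ _ u0 ut) (ler_norm _)).
by rewrite lam_itv_oc // => /le_trans /(_ ds); rewrite lee_fin leNgt tt'.
Qed.

Definition right_locally_constant (w : R -> R) :=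
  forall t, (0 < t)%R -> exists2 t', (t < t')%R & forall u, (t <= u <= t')%R -> w u = w t.

Lemma right_lscM w g : (forall u, (0 < u)%R -> (0 <= w u)%R) -> right_locally_constant w ->
  (forall u, (0 < u)%R -> (0 <= g u)%R) -> nonincreasing_pos g -> right_lsc g ->
  right_lsc (fun u => w u * g u)%R.
Proof.
move=> w0 wrc g0 gni grc t s t0 st.
have [wt_gt0|wt_le0] := ltP 0%R (w t); last first.
  have wt0 : w t = 0%R by apply/le_anti; rewrite wt_le0 w0.
  have t1 : (0 < t + 1)%R by rewrite addr_gt0.
  exists (t + 1)%R; first by rewrite ltrDl.
  by apply: lt_le_trans (mulr_ge0 (w0 _ t1) (g0 _ t1)); rewrite wt0 mul0r in st.
have [t1 tt1 wt1] := wrc t t0.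
have [t2 tt2 st2] : exists2 t2, (t < t2)%R & (s / w t < g t2)%R.
  by apply: grc; rewrite // ltr_pdivrMr // mulrC.
exists (Num.min t1 t2); first by rewrite lt_min tt1.
have tt' : (t <= Num.min t1 t2)%R by rewrite le_min !ltW.
rewrite wt1 ?tt' ?ge_min ?lexx // mulrC -ltr_pdivrMr //.
apply: lt_le_trans st2 (gni _ _ _ _); last by rewrite ge_min lexx orbT.
exact: lt_le_trans t0 tt'.
Qed.

Definition rearr_fine g t := fine (rearr g t).

Section bounded.
Variables (g : R -> R) (C : R).
Hypothesis gC : dist_fun g C = 0.

Lemma rearr_fineK t : (0 <= t)%R -> (rearr_fine g t)%:E = rearr g t.
Proof.
move=> t0; rewrite fineK // ge0_fin_numE ?rearr_ge0 //.
exact: le_lt_trans (rearr_le_Linfty gC t0) (ltry _).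
Qed.

Lemma rearr_fine_ge0 t : (0 <= t)%R -> (0 <= rearr_fine g t)%R.
Proof. by move=> t0; rewrite -lee_fin rearr_fineK ?rearr_ge0. Qed.

Lemma rearr_fine_le t : (0 <= t)%R -> (rearr_fine g t <= Num.max C 0)%R.
Proof. by move=> t0; rewrite -lee_fin rearr_fineK ?rearr_le_Linfty. Qed.

Lemma rearr_fine_noninc : nonincreasing_pos (rearr_fine g).
Proof.
move=> u v u0 uv; have v0 : (0 < v)%R := lt_le_trans u0 uv.
by rewrite -lee_fin !rearr_fineK ?rearr_noninc ?(ltW u0) ?(ltW v0).
Qed.

Lemma rearr_fine_right_lsc : right_lsc (rearr_fine g).
Proof.
move=> t s t0; rewrite -lte_fin rearr_fineK ?(ltW t0) // => /rearr_gt_right[t' tt' st'].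
have t'0 := lt_trans t0 tt'.
by exists t' => //; rewrite -lte_fin rearr_fineK ?(ltW t'0).
Qed.

Lemma lmeas_rearr_fine : lmeas (rearr_fine g).
Proof.
apply: (@lmeas_noninc _ _ (Num.max C 0%R)) => [|u u0]; first exact: rearr_fine_noninc.
exact/rearr_fine_le/ltW.
Qed.

End bounded.

End rearrangement.

Section monotone_products.
Context {R : realType}.
Implicit Types (g w : R -> R) (a : R).

Lemma nonincreasing_posM w g : (forall u, 0 < u -> 0 <= w u) -> nonincreasing_pos w ->
  (forall u, 0 < u -> 0 <= g u) -> nonincreasing_pos g ->
  nonincreasing_pos (fun u => w u * g u).
Proof.
move=> w0 wni g0 gni u v u0 uv; have v0 := lt_le_trans u0 uv.
by apply: ler_pM; rewrite ?w0 ?g0 ?wni ?gni.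
Qed.

Lemma nonincreasing_pos_step a : nonincreasing_pos (fun u : R => (u < a)%R%:R).
Proof. by move=> u v _ uv; case: (ltP v a) => va; rewrite ?ler0n ?(le_lt_trans uv va). Qed.

Lemma right_locally_constant_step a : right_locally_constant (fun u : R => (u < a)%R%:R).
Proof.
move=> t _; case: (ltP t a) => ta.
  have [tm ma] := midf_lt ta.
  by exists ((t + a) / 2) => // u /andP[_ um]; rewrite (le_lt_trans um ma).
by exists (t + 1); rewrite ?ltrDl // => u /andP[tu _]; rewrite ltNge (le_trans ta tu).
Qed.

Lemma nonincreasing_pos_cutoff a g : (forall u, 0 < u -> 0 <= g u) ->
  nonincreasing_pos g -> nonincreasing_pos (cutoff a g).
Proof. by apply: nonincreasing_posM => // *; exact: nonincreasing_pos_step. Qed.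

Lemma right_lsc_cutoff a g : (forall u, 0 < u -> 0 <= g u) ->
  nonincreasing_pos g -> right_lsc g -> right_lsc (cutoff a g).
Proof. by apply: right_lscM => //; exact: right_locally_constant_step. Qed.

End monotone_products.

Section step_weight.
Context {R : realType}.
Variable T : nat -> nat.
Hypothesis T_lt : forall k, (T k < T k.+1)%N.

Let T_le : {homo T : i j / (i <= j)%N}.
Proof. exact: homo_leq leqnn leq_trans (fun k => ltnW (T_lt k)). Qed.

Lemma exists_step_index (t : R) : exists k, t < (T k.+1)%:R.
Proof.
have T_ge k : (k <= T k)%N by elim: k => // k IH; exact: leq_ltn_trans IH (T_lt k).
by exists (Num.truncn t); apply: lt_le_trans (truncnS_gt t) _; rewrite ler_nat T_ge.
Qed.

(* The [k] with [T k <= t < T k.+1], or [0] when [t < T 1]. *)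
Definition step_index (t : R) := ex_minn (exists_step_index t).

Lemma step_index_lt t : t < (T (step_index t).+1)%:R.
Proof. by rewrite /step_index; case: ex_minnP. Qed.

Lemma step_index_le k t : t < (T k.+1)%:R -> (step_index t <= k)%N.
Proof. by rewrite /step_index; case: ex_minnP => m _; apply. Qed.

Lemma step_index_ge k t : (T k)%:R <= t -> (k <= step_index t)%N.
Proof.
move=> Tkt; rewrite leqNgt; apply/negP => ik.
have : (T (step_index t).+1)%:R <= t by apply: le_trans Tkt; rewrite ler_nat T_le.
by rewrite leNgt step_index_lt.
Qed.

Lemma step_index_mono t u : t <= u -> (step_index t <= step_index u)%N.
Proof. by move=> tu; apply: step_index_le; exact: le_lt_trans tu (step_index_lt u). Qed.

Definition step_weight t : R := (step_index t).+1%:R^-1.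

Lemma step_weight_gt0 t : 0 < step_weight t.
Proof. by rewrite invr_gt0 ltr0n. Qed.

Lemma step_weight_le1 t : step_weight t <= 1.
Proof. by rewrite invf_le1 ?ltr0n // ler1n. Qed.

Lemma step_weight_noninc : nonincreasing_pos step_weight.
Proof.
move=> u v _ uv; rewrite lef_pV2 ?posrE ?ltr0n // ler_nat ltnS.
exact: step_index_mono.
Qed.

Lemma step_weight_tail k t : (T k)%:R <= t -> step_weight t <= k.+1%:R^-1.
Proof. by move=> Tkt; rewrite lef_pV2 ?posrE ?ltr0n // ler_nat ltnS step_index_ge. Qed.

Lemma step_weight_window k t : t < (T k.+1)%:R -> k.+1%:R^-1 <= step_weight t.
Proof. by move=> tTk; rewrite lef_pV2 ?posrE ?ltr0n // ler_nat ltnS step_index_le. Qed.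

Lemma step_weight_right_locally_constant : right_locally_constant step_weight.
Proof.
move=> t _; have [lt_tm lt_mb] := midf_lt (step_index_lt t).
exists ((t + (T (step_index t).+1)%:R) / 2) => // u /andP[tu um].
rewrite /step_weight; congr (_.+1%:R^-1); apply/eqP.
rewrite eqn_leq (step_index_mono tu) andbT; apply: step_index_le.
exact: le_lt_trans um lt_mb.
Qed.

End step_weight.

Section function_spaces.
Context {R : realType}.
Implicit Types (g : R -> R) (a b t u M : R).

Lemma indic_itv_lt a t : \1_(`]-oo, a[%classic : set R) t = (t < a)%R%:R :> R.
Proof.
rewrite indicE; case: (ltP t a) => ta.
- by rewrite mem_set //= in_itv /= ta.
- by rewrite memNset //= in_itv /= ltNge ta.
Qed.

Lemma Linfty_bounded g M : lmeas g -> (forall u, 0 < u -> `|g u| <= M) -> Linfty g.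
Proof.
move=> mg gM; split => //; exists M; rewrite /dist_fun.
rewrite (_ : [set _ | _] = set0) ?lamE ?measure0 //.
by apply/seteqP; split => // u [u0]; rewrite ltNge gM.
Qed.

Lemma L1_bounded_support g M b : lmeas g -> (forall u, 0 < u -> `|g u| <= M) ->
  (forall u, 0 < u -> b <= u -> g u = 0) -> L1 g.
Proof.
move=> mg gM gb; split => //; change (int_pos (fun t => `|g t|%R) < +oo)%E.
pose b' := Num.max b 1; have b'0 : 0 < b' by rewrite lt_max ltr01 orbT.
pose M' := Num.max M 0; have M'0 : 0 <= M' by rewrite le_max lexx orbT.
have mI : measurable (`]-oo, b'[%classic : set (LR R)).
  exact: measurable_lebesgue (measurable_itv _).
apply: (@le_lt_trans _ _ (int_pos (fun t => M' * \1_(`]-oo, b'[%classic : set R) t))).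
  apply: le_int_pos => t t0 //; rewrite indic_itv_lt.
  case: (ltP t b') => tb; rewrite ?mulr1 ?mulr0.
    by apply: le_trans (gM t t0) _; rewrite le_max lexx.
  have bt : b <= t by apply: le_trans tb; rewrite le_max lexx.
  by rewrite gb ?normr0.
rewrite int_posZ //; last exact: measurable_indic.
rewrite /int_pos integral_indic //; last exact: measurable_pos_half_lebesgue.
apply: (@le_lt_trans _ _ (M'%:E * b'%:E)%E); last by rewrite ltry.
apply: lee_wpmul2l; first by rewrite lee_fin.
rewrite -(lam_itv_oc b'0); apply: le_lam => u [] /=; rewrite !in_itv /= => ub u0.
by rewrite u0 (ltW ub).
Qed.

Lemma E0_L1_Linfty E nrm g : symmetric_function_space E nrm ->
  E g -> L1 g -> Linfty g -> E0 E nrm g.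
Proof.
move=> sfs Eg L1g Lig; split => // e e0; exists g; split => //.
have -> : (fun t => g t - g t) = (fun t => 0 * (fun _ : R => 0) t).
  by apply/funext => t; rewrite subrr mul0r.
by rewrite (sfs_homog sfs) ?normr0 ?mul0r //; exact: sfs_zero sfs.
Qed.

Definition Ln1_weight (n : nat) t := n%:R^-1 * powR t (n%:R^-1 - 1).

Lemma Ln1_weight_ge0 n t : 0 <= Ln1_weight n t.
Proof. by rewrite mulr_ge0 ?invr_ge0 ?powR_ge0. Qed.

Lemma lmeas_Ln1_weight n : lmeas (Ln1_weight n).
Proof.
apply: lmeas_measurable; apply: measurable_funM; first exact: measurable_cst.
exact: measurable_funS (measurable_powR _).
Qed.

Lemma int_pos_le_Ln1_norm n g : (forall t, 0 < t -> 0 <= g t) ->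
  nonincreasing_pos g -> right_lsc g ->
  (int_pos (fun t => g t * Ln1_weight n t)%R <= Ln1_norm n g)%E.
Proof.
move=> g0 gni grc; apply: le_ge0_integral => t t0.
  exact: mulr_ge0 (g0 t t0) (Ln1_weight_ge0 n t).
rewrite EFinM; apply: lee_wpmul2r; first by rewrite lee_fin Ln1_weight_ge0.
exact: noninc_le_rearr.
Qed.

End function_spaces.

Section dominated.
Context {R : realType}.
Variables (n : nat) (E : set (R -> R)) (nrm : (R -> R) -> R) (x : R -> R) (C : R).
Hypotheses (sfs : symmetric_function_space E nrm) (Ex : E x) (xC : dist_fun x C = 0%E).
Hypothesis E0_Ln1 : forall y, E0 E nrm y -> Linfty y -> Ln1 n y.

Local Notation phi := (rearr_fine x).
Local Notation W := (Ln1_weight n).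
Let F t := phi t * W t.
Let C' := Num.max C 0.

Let phi_ge0 t : 0 < t -> 0 <= phi t.
Proof. by move=> t0; apply: (rearr_fine_ge0 xC); exact: ltW. Qed.

Let phi_le t : 0 < t -> phi t <= C'.
Proof. by move=> t0; apply: (rearr_fine_le xC); exact: ltW. Qed.

Let F_ge0 t : 0 < t -> 0 <= F t.
Proof. by move=> t0; rewrite mulr_ge0 ?phi_ge0 ?Ln1_weight_ge0. Qed.

Let lmeas_F : lmeas F.
Proof. exact: measurable_funM (lmeas_rearr_fine xC) (lmeas_Ln1_weight n). Qed.

Let Ln1_norm_x : Ln1_norm n x = int_pos F.
Proof.
apply: eq_integral => t /[!inE] t0.
by rewrite -(rearr_fineK xC (ltW t0)) EFinM.
Qed.

Lemma mem_E_dom g : lmeas g -> (forall u, 0 < u -> `|g u| <= phi u) -> E g.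
Proof.
move=> mg gphi; have [] // := sfs_sym sfs Ex mg.
move=> t t0; rewrite -(rearr_fineK xC (ltW t0)).
exact: rearr_le_noninc (phi_ge0 t0) (rearr_fine_noninc xC) gphi.
Qed.

Lemma dom_cutoff_E_L1_Linfty a g : lmeas g -> (forall u, 0 < u -> `|g u| <= phi u) ->
  [/\ E (cutoff a g), L1 (cutoff a g) & Linfty (cutoff a g)].
Proof.
move=> mg gphi; have mc := lmeas_cutoff a mg.
have c_phi u : 0 < u -> `|cutoff a g u| <= phi u.
  move=> u0; rewrite /cutoff; case: (ltP u a) => _; rewrite ?mul1r ?gphi //.
  by rewrite mul0r normr0 phi_ge0.
have c_C u : 0 < u -> `|cutoff a g u| <= C'.
  by move=> u0; exact: le_trans (c_phi u u0) (phi_le u0).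
split; [exact: mem_E_dom | | exact: Linfty_bounded mc c_C].
by apply: (@L1_bounded_support _ _ C' a mc c_C) => u _ au; rewrite /cutoff ltNge au mul0r.
Qed.

Let int_pos_cutoff_F_lt a : (int_pos (cutoff a F) < +oo)%E.
Proof.
have phi_dom u : 0 < u -> `|phi u| <= phi u by move=> u0; rewrite ger0_norm ?phi_ge0.
have [Ec L1c Lic] := dom_cutoff_E_L1_Linfty a (lmeas_rearr_fine xC) phi_dom.
have [_ fin] := E0_Ln1 (E0_L1_Linfty sfs Ec L1c Lic) Lic.
apply: le_lt_trans fin.
have -> : cutoff a F = fun t => cutoff a phi t * W t.
  by apply/funext => t; rewrite /cutoff /F mulrA.
apply: int_pos_le_Ln1_norm.
- by move=> t t0; rewrite cutoff_ge0 ?phi_ge0.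
- exact: nonincreasing_pos_cutoff phi_ge0 (rearr_fine_noninc xC).
- exact: right_lsc_cutoff phi_ge0 (rearr_fine_noninc xC) (rearr_fine_right_lsc xC).
Qed.

Lemma exists_window : Ln1_norm n x = +oo%E -> forall (A : R) (a : nat),
  exists b, (a < b)%N /\ (A%:E <= int_pos (window a%:R b%:R F))%E.
Proof.
move=> x_infty A a.
have Ia_fin : int_pos (cutoff a%:R F) \is a fin_num.
  rewrite ge0_fin_numE ?int_pos_cutoff_F_lt // int_pos_ge0 // => t t0.
  by rewrite cutoff_ge0 ?F_ge0.
have := cvg_int_pos_cutoff lmeas_F F_ge0; rewrite -Ln1_norm_x x_infty.
move=> /cvgeyPge /(_ (fine (int_pos (cutoff a%:R F)) + A)) [N _ hN].
exists (maxn N a.+1); split; first by rewrite leq_max ltnSn orbT.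
have := hN _ (leq_maxl N a.+1).
rewrite (@int_pos_cutoffD _ a%:R (maxn N a.+1)%:R) // ?ler_nat ?leq_max ?leqnSn ?orbT //.
by rewrite EFinD fineK // leeD2lE.
Qed.

Section divergent_windows.
Variable T : nat -> nat.
Hypothesis T_lt : forall k, (T k < T k.+1)%N.
Hypothesis T_window :
  forall k, (k.+1%:R%:E <= int_pos (window (T k)%:R (T k.+1)%:R F))%E.

Local Notation w := (step_weight T_lt).
Let z t := w t * phi t.

Let z_ge0 t : 0 < t -> 0 <= z t.
Proof. by move=> t0; rewrite mulr_ge0 ?phi_ge0 // ltW ?step_weight_gt0. Qed.

Let z_le_phi t : 0 < t -> `|z t| <= phi t.
Proof.
move=> t0; rewrite ger0_norm ?z_ge0 // -[leRHS]mul1r.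
by rewrite ler_wpM2r ?phi_ge0 ?step_weight_le1.
Qed.

Let z_noninc : nonincreasing_pos z.
Proof.
apply: nonincreasing_posM (rearr_fine_noninc xC) => [u _||//].
- exact/ltW/step_weight_gt0.
- exact: step_weight_noninc.
Qed.

Let z_right_lsc : right_lsc z.
Proof.
apply: right_lscM (rearr_fine_noninc xC) (rearr_fine_right_lsc xC) => [u _||//].
- exact/ltW/step_weight_gt0.
- exact: step_weight_right_locally_constant.
Qed.

Let lmeas_z : lmeas z.
Proof.
apply: (@lmeas_noninc _ _ C') z_noninc _ => u u0.
exact: le_trans (ler_norm _) (le_trans (z_le_phi u0) (phi_le u0)).
Qed.

Let nrm_sub_cutoff_z k :
  nrm (fun u => z u - cutoff (T k)%:R z u) <= k.+1%:R^-1 * nrm x.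
Proof.
pose a := k.+1%:R^-1 : R; have a_gt0 : 0 < a by rewrite invr_gt0 ltr0n.
have tail u : 0 < u -> `|z u - cutoff (T k)%:R z u| <= a * phi u.
  move=> u0; rewrite /cutoff; case: (ltP u (T k)%:R) => uT.
    by rewrite mul1r subrr normr0 mulr_ge0 ?phi_ge0 ?ltW.
  by rewrite mul0r subr0 ger0_norm ?z_ge0 // ler_wpM2r ?phi_ge0 ?step_weight_tail.
have aphi_noninc : nonincreasing_pos (fun u => a * phi u).
  by move=> u v u0 uv; rewrite ler_wpM2l ?(ltW a_gt0) ?(rearr_fine_noninc xC).
have le_rearr t : 0 < t ->
    (rearr (fun u => z u - cutoff (T k)%:R z u)%R t <= rearr (fun u => a * x u)%R t)%E.
  move=> t0; apply: le_trans (rearr_le_noninc t0 _ aphi_noninc tail) _.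
    by rewrite mulr_ge0 ?phi_ge0 ?ltW.
  by apply: rearrZ_ge => //; rewrite (rearr_fineK xC (ltW t0)).
have [_ le_nrm] := sfs_sym sfs (sfs_scale sfs a Ex)
  (measurable_funB lmeas_z (lmeas_cutoff _ lmeas_z)) le_rearr.
by apply: le_trans le_nrm _; rewrite (sfs_homog sfs) // ger0_norm // ltW.
Qed.

Let E0_z : E0 E nrm z.
Proof.
split=> [|e e0]; first exact: mem_E_dom lmeas_z z_le_phi.
have [k ek] : exists k : nat, k.+1%:R^-1 * nrm x < e.
  exists (Num.truncn (nrm x / e)); rewrite ltr_pdivrMl ?ltr0n // -ltr_pdivrMr //.
  exact: lt_le_trans (truncnS_gt _) _.
have [Ey L1y Liy] := dom_cutoff_E_L1_Linfty (T k)%:R lmeas_z z_le_phi.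
by exists (cutoff (T k)%:R z); split => //; exact: le_lt_trans (nrm_sub_cutoff_z k) ek.
Qed.

Let Linfty_z : Linfty z.
Proof.
apply: Linfty_bounded lmeas_z _ => u u0.
exact: le_trans (z_le_phi u0) (phi_le u0).
Qed.

Let zW_ge0 t : 0 < t -> 0 <= z t * W t.
Proof. by move=> t0; rewrite mulr_ge0 ?z_ge0 ?Ln1_weight_ge0. Qed.

Let one_le_window_zW k :
  (1 <= int_pos (window (T k)%:R (T k.+1)%:R (fun t => z t * W t)%R))%E.
Proof.
apply: (@le_trans _ _ ((k.+1%:R^-1)%:E * k.+1%:R%:E)%E).
  by rewrite -EFinM mulVf ?pnatr_eq0.
have k1_ge0 : (0 <= (k.+1%:R^-1)%:E :> \bar R)%E by rewrite lee_fin invr_ge0.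
apply: le_trans (lee_wpmul2l k1_ge0 (T_window k)) _.
rewrite -int_posZ ?invr_ge0 //; last first.
- by move=> t t0; rewrite window_ge0 ?F_ge0.
- exact: lmeas_window.
apply: le_int_pos => t t0; first by rewrite mulr_ge0 ?window_ge0 ?F_ge0.
rewrite /window /cutoff; case: (leP (T k)%:R t) => Tkt; rewrite ?mul0r ?mulr0 //.
case: (ltP t (T k.+1)%:R) => tTk; rewrite ?mul0r ?mulr0 ?mul1r //.
rewrite /F /z mulrA ler_wpM2r ?Ln1_weight_ge0 // ler_wpM2r ?phi_ge0 //.
exact: step_weight_window.
Qed.

Let int_pos_cutoff_zW_ge N :
  (N%:R%:E <= int_pos (cutoff (T N)%:R (fun t => z t * W t)%R))%E.
Proof.
elim: N => [|N IH].
  by apply: int_pos_ge0 => t t0; rewrite cutoff_ge0 ?zW_ge0.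
rewrite (@int_pos_cutoffD _ (T N)%:R) ?ler_nat ?(ltnW (T_lt N)) //; last first.
  exact: measurable_funM lmeas_z (lmeas_Ln1_weight n).
by rewrite -natr1 EFinD leeD ?one_le_window_zW.
Qed.

Lemma no_divergent_windows : False.
Proof.
have zW_infty : int_pos (fun t => z t * W t)%R = +oo%E.
  apply/eqyP => A A0.
  apply: le_trans _ (le_trans (int_pos_cutoff_zW_ge (Num.truncn A).+1) _).
    by rewrite lee_fin ltW // truncnS_gt.
  apply: le_int_pos => t t0; first by rewrite cutoff_ge0 ?zW_ge0.
  by rewrite /cutoff; case: ltP; rewrite ?mul1r ?mul0r ?zW_ge0.
have := int_pos_le_Ln1_norm n z_ge0 z_noninc z_right_lsc.
rewrite zW_infty leye_eq => /eqP z_infty.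
by have [_] := E0_Ln1 E0_z Linfty_z; rewrite z_infty ltxx.
Qed.

End divergent_windows.

Lemma Ln1_norm_lt_pinfty : (Ln1_norm n x < +oo)%E.
Proof.
rewrite ltNge leye_eq; apply/negP => /eqP x_infty.
have [T T_spec] := dependent_choice_nat (fun k a => exists_window x_infty k.+1%:R a).
exact: (no_divergent_windows (fun k => (T_spec k).1) (fun k => (T_spec k).2)).
Qed.

End dominated.

Theorem lemma5p8 (R : realType) (n : nat) (E : set (R -> R))
    (nrm : (R -> R) -> R) :
  (0 < n)%N ->
  symmetric_function_space E nrm ->
  (forall x, E0 E nrm x -> Linfty x -> Ln1 n x) ->
  forall x, E x -> Linfty x -> Ln1 n x.
Proof.
move=> _ sfs E0_Ln1 x Ex [mx [C xC]]; split => //.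
exact: Ln1_norm_lt_pinfty sfs Ex xC E0_Ln1.
Qed.
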